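(* Fix integers $n\ge m\ge 0$, $N_T\ge1$, and a nonzero homogeneous polynomial $Q$ of degree $n-m$ in $a^\dagger_1,\dots,a^\dagger_{N_T}$ (a pure $(n-m)$-photon, $N_T$-mode target state). Let $N=\max\{n,N_T+m\}$ and $M=m$, and consider the optimal configuration: input $\prod_{i=1}^n a^\dagger_i|0\rangle$ on $N$ modes and heralding pattern $(1,\dots,1)$ on the last $m$ modes. Equating the coefficients of all monomials in $a^\dagger_1,\dots,a^\dagger_{N-M}$ in the identity $\gamma G=Q$ gives a finite system of polynomial equations $f_1=\dots=f_s=0$ in the unknowns $\gamma$ and $A_{i,j}$ ($1\le i,j\le N$). If this system admits a Nullstellensatz certificate, i.e. polynomials $\beta_1,\dots,\beta_s$ in these unknowns with complex coefficients such that $1=\sum_{i=1}^s\beta_i f_i$, then $Q$ cannot be generated, for any number of modes, from any multi-mode Fock input state containing $n$ photons heralded by any photon-number pattern containing $m$ photons.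
   Context: Heralded linear-optical state generation model. States with a fixed photon number are homogeneous polynomials in commuting variables $a^\dagger_1,\dots,a^\dagger_N$ applied to the vacuum. Given $N$ modes, an arbitrary complex $N\times N$ matrix $A$ (not required to be unitary), and a Fock input $\prod_{i=1}^N\frac{1}{\sqrt{n_i!}}(a^\dagger_{i,\mathrm{in}})^{n_i}|0\rangle$, the output is $F|0\rangle$ with $F=\prod_{i=1}^N\frac{1}{\sqrt{n_i!}}\big(\sum_{j=1}^N A_{i,j}a^\dagger_j\big)^{n_i}$. Heralding the last $M$ modes on the pattern $(m_1,\dots,m_M)$ (entries $\ge0$, zero meaning vacuum), $m=\sum_j m_j$, gives $G=\frac{1}{\prod_j m_j!}\,\frac{\partial^{m}F}{\partial(a^\dagger_{N-M+1})^{m_1}\cdots\partial(a^\dagger_N)^{m_M}}\Big|_{a^\dagger_{N-M+1}=\cdots=a^\dagger_N=0}$, a polynomial in $a^\dagger_1,\dots,a^\dagger_{N-M}$. A target $Q$ on $N_T\le N-M$ modes is viewed as a polynomial in $a^\dagger_1,\dots,a^\dagger_{N-M}$ (remaining target-side modes in vacuum). $Q$ can be generated from a given input and heralding pattern if there exist a complex $N\times N$ matrix $A$ and $\gamma\in\mathbb{C}$ with $\gamma G=Q$. *)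

From HB Require Import structures.
From mathcomp Require Import all_boot all_algebra.
From mathcomp Require Import reals.
From mathcomp Require Import mpoly complex.

Set Implicit Arguments.
Unset Strict Implicit.
Unset Printing Implicit Defensive.

Import GRing.Theory Num.Theory.
Local Open Scope ring_scope.

(* Modes are indexed by 'I_(K + M): the first K modes are kept, the last M
   modes (indices rshift K j, j : 'I_M) are heralded.  N = K + M.          *)

(* F = prod_i c_i (sum_j A_{i,j} a^dag_j)^{n_i}, with normalisation c_i,
   over an arbitrary commutative ring (so that it can be used both with
   numerical entries and with indeterminate entries). *)
Definition Fpoly (R : comNzRingType) (N : nat) (A : 'M[R]_N)
    (nin : 'I_N -> nat) (c : 'I_N -> R) : {mpoly R[N]} :=
  \prod_(i < N) (c i *: (\sum_(j < N) A i j *: 'X_j) ^+ nin i).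

Definition herald_mnm (K M : nat) (mpat : 'I_M -> nat) : 'X_{1..K + M} :=
  [multinom (match split i with inl _ => 0%N | inr j => mpat j end)
   | i < K + M].

Definition herald_subst (R : comNzRingType) (K M : nat)
    : (K + M).-tuple {mpoly R[K]} :=
  [tuple (match split i with inl k => 'X_k | inr _ => 0 end) | i < K + M].

Definition Gpoly (R : comNzRingType) (K M : nat) (A : 'M[R]_(K + M))
    (nin : 'I_(K + M) -> nat) (c : 'I_(K + M) -> R)
    (mpat : 'I_M -> nat) (d : R) : {mpoly R[K]} :=
  d *: ((Fpoly A nin c)^`M[herald_mnm K mpat] \mPo herald_subst R K M).

Definition embed_target (R : comNzRingType) (NT K : nat)
    (Q : {mpoly R[NT]}) : {mpoly R[K]} :=
  Q \mPo [tuple (match @insub nat (fun k => k < K)%N _ (val i) with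
          | Some k => 'X_k | None => 0 end) | i < NT].

Section Complex.
Variable (R : realType).
Local Notation C := (R[i]).

(* Fock normalisation 1/sqrt(n_i!) and heralding normalisation 1/prod m_j! *)
Definition in_const (N : nat) (nin : 'I_N -> nat) (i : 'I_N) : C :=
  (sqrtC ((nin i)`!)%:R)^-1.
Definition herald_const (M : nat) (mpat : 'I_M -> nat) : C :=
  ((\prod_(j < M) (mpat j)`!)%:R)^-1.

Definition Gheralded (K M : nat) (A : 'M[C]_(K + M))
    (nin : 'I_(K + M) -> nat) (mpat : 'I_M -> nat) : {mpoly C[K]} :=
  Gpoly A nin (in_const nin) mpat (herald_const mpat).

Definition generable (NT K M : nat) (nin : 'I_(K + M) -> nat)
    (mpat : 'I_M -> nat) (Q : {mpoly C[NT]}) : Prop :=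
  exists (A : 'M[C]_(K + M)) (gamma : C),
    gamma *: Gheralded A nin mpat = embed_target K Q.

(* The polynomial system: unknowns gamma (variable ord0) and A_{i,j}
   (variable lift ord0 (mxvec_index i j)), i.e. 1 + N*N unknowns. *)
Definition unknowns (N : nat) := {mpoly C[(N * N).+1]}.

Definition gamma_var (N : nat) : unknowns N := 'X_ord0.
Definition A_var (N : nat) : 'M[unknowns N]_N :=
  \matrix_(i, j) 'X_(lift ord0 (mxvec_index i j)).

(* gamma * G - Q as a polynomial in a^dag_1..a^dag_K whose coefficients are
   polynomials in the unknowns *)
Definition system_poly (NT K M : nat) (nin : 'I_(K + M) -> nat)
    (mpat : 'I_M -> nat) (Q : {mpoly C[NT]}) : {mpoly (unknowns (K + M))[K]} :=
  gamma_var (K + M) *: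
    Gpoly (A_var (K + M)) nin (fun i => (in_const nin i)%:MP)
          mpat ((herald_const mpat)%:MP)
  - embed_target K (map_mpoly (fun c : C => mpolyC ((K + M) * (K + M)).+1 c) Q).

(* the equations f_mu = coefficient of the monomial mu in gamma G - Q;
   a Nullstellensatz certificate: 1 = sum_mu beta_mu f_mu (finite sum) *)
Definition has_Nullstellensatz_certificate (NT K M : nat)
    (nin : 'I_(K + M) -> nat) (mpat : 'I_M -> nat) (Q : {mpoly C[NT]}) : Prop :=
  exists (s : seq 'X_{1..K}) (beta : 'X_{1..K} -> unknowns (K + M)),
    1 = \sum_(mu <- s) beta mu * (@system_poly NT K M nin mpat Q)@_mu.

End Complex.

(* optimal configuration: N = max(n, NT + m), M = m, K = N - m;
   input: one photon in each of the first n modes; heralding pattern (1,...,1) *)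
Definition optK (n m NT : nat) : nat := (maxn n (NT + m) - m)%N.
Definition opt_input (n m NT : nat) : 'I_(optK n m NT + m) -> nat :=
  fun i => (i < n)%N : nat.
Definition opt_pattern (m : nat) : 'I_m -> nat := fun _ => 1%N.

From HB Require Import structures.
From mathcomp Require Import all_boot all_algebra.
From mathcomp Require Import reals.
From mathcomp Require Import mpoly complex.
Import GRing.Theory Num.Theory.
Local Open Scope ring_scope.
Set Implicit Arguments.
Unset Strict Implicit.
Unset Printing Implicit Defensive.

(* A linear change of the mode variables reduces any heralded configuration
   with n input photons and m herald photons to the optimal one.  Let S send
   the kept modes a_k, k < N_T, to themselves, the other kept modes to 0, and
   each heralded mode a_j to the sum of m_j fresh heralded modes (the [owner]
   of a fresh mode is the old mode it comes from).  By the chain rule,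
   differentiating P o S once in every fresh heralded mode gives
   (d^m P / da_1^{m_1} ... da_M^{m_M}) o S.  Moreover F(A) o S is, up to the
   normalisation constants, the product of the linear forms given by the rows
   of A S, the row of mode i taken n_i times: this is F for the optimal
   single-photon input, with the matrix whose p-th row is that of the source
   mode of the p-th photon.  Hence a pair (gamma, A) generating Q yields a
   complex common zero of the equations f_1, ..., f_s of the optimal
   configuration, at which 1 = sum_i beta_i f_i evaluates to 1 = 0. *)

Section LinearSubstitution.
Variable R : comNzRingType.

Lemma mpoly_ring_ind (a : nat) (P : {mpoly R[a]} -> Prop) :
  (forall c, P c%:MP) -> (forall i, P 'X_i) ->
  (forall p q, P p -> P q -> P (p + q)) ->
  (forall p q, P p -> P q -> P (p * q)) -> forall p, P p.
Proof.
move=> PC PX PD PM p; rewrite [p]mpolyE.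
have P1 : P 1 by rewrite -mpolyC1.
apply: (big_ind P) => [|q r|m _]; [by rewrite -mpolyC0 | exact: PD |].
rewrite -mul_mpolyC mpolyXE_id; apply: (PM); first exact: PC.
apply: (big_ind P) => [//|q r|i _]; first exact: PM.
by elim: (m i) => [|k IHk]; rewrite ?expr0 // exprS; apply: (PM).
Qed.

Lemma comp_mpolyA (a b c : nat) (p : {mpoly R[a]}) (lq : a.-tuple {mpoly R[b]})
    (lr : b.-tuple {mpoly R[c]}) :
  p \mPo lq \mPo lr = p \mPo [tuple tnth lq i \mPo lr | i < a].
Proof.
elim/mpoly_ring_ind: p => [c0|i|p q Hp Hq|p q Hp Hq].
- by rewrite !comp_mpolyC.
- by rewrite !comp_mpolyXU -!tnth_nth tnth_mktuple.
- by rewrite !raddfD /= Hp Hq.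
- by rewrite !rmorphM /= Hp Hq.
Qed.

Lemma mderivXU (a : nat) (i j : 'I_a) :
  ('X_i : {mpoly R[a]})^`M(j) = (i == j)%:R.
Proof.
rewrite mderivX mnm1E; case: eqP => [->|_]; last by rewrite scale0r.
have -> : (U_(j) - U_(j) = 0)%MM by apply/mnmP => k; rewrite mnmBE subnn mnm0E.
by rewrite mpolyX0 scale1r.
Qed.

Lemma mderiv_comp (a b : nat) (p : {mpoly R[a]}) (lq : a.-tuple {mpoly R[b]})
    (y : 'I_b) :
  (p \mPo lq)^`M(y) = \sum_(j < a) (p^`M(j) \mPo lq) * (tnth lq j)^`M(y).
Proof.
elim/mpoly_ring_ind: p => [c0|i|p q Hp Hq|p q Hp Hq].
- rewrite comp_mpolyC mderivC big1 // => j _.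
  by rewrite mderivC comp_mpoly0 mul0r.
- rewrite comp_mpolyXU -tnth_nth (bigD1 i) //= big1 => [|j /negbTE ji].
    by rewrite mderivXU eqxx comp_mpoly1 mul1r addr0.
  by rewrite mderivXU eq_sym ji comp_mpoly0 mul0r.
- rewrite !raddfD /= Hp Hq -big_split /=.
  by apply: eq_bigr => j _; rewrite !raddfD /= mulrDl.
- rewrite !rmorphM /= mderivM Hp Hq big_distrl big_distrr -big_split /=.
  apply: eq_bigr => j _; rewrite mderivM raddfD /= !rmorphM /= mulrDl.
  by rewrite mulrAC mulrA.
Qed.

Definition linform (b : nat) (r : 'rV[R]_b) : {mpoly R[b]} :=
  \sum_(j < b) r 0 j *: 'X_j.

Definition lin_subst (a b : nat) (S : 'M[R]_(a, b)) : a.-tuple {mpoly R[b]} :=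
  [tuple linform (row i S) | i < a].

Lemma linform0 (b : nat) : linform (0 : 'rV[R]_b) = 0.
Proof. by rewrite /linform big1 // => j _; rewrite mxE scale0r. Qed.

Lemma linform_delta (b : nat) (k : 'I_b) :
  linform (delta_mx 0 k : 'rV[R]_b) = 'X_k.
Proof.
rewrite /linform (bigD1 k) //= mxE !eqxx scale1r big1 ?addr0 // => j.
by rewrite mxE eq_sym => /negbTE ->; rewrite scale0r.
Qed.

Lemma mderiv_linform (b : nat) (r : 'rV[R]_b) (j : 'I_b) :
  (linform r)^`M(j) = (r 0 j)%:MP.
Proof.
rewrite raddf_sum (bigD1 j) //= big1 => [|k /negbTE kj].
  by rewrite mderivZ mderivXU eqxx addr0 -alg_mpolyC.
by rewrite mderivZ mderivXU kj scaler0.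
Qed.

Lemma comp_linform (a b : nat) (r : 'rV[R]_a) (S : 'M[R]_(a, b)) :
  linform r \mPo lin_subst S = linform (r *m S).
Proof.
rewrite {1}/linform raddf_sum /=.
under eq_bigr => i _ do
  rewrite comp_mpolyZ comp_mpolyXU -tnth_nth tnth_mktuple scaler_sumr.
rewrite exchange_big /=; apply: eq_bigr => j _.
by rewrite !mxE scaler_suml; apply: eq_bigr => i _; rewrite mxE scalerA.
Qed.

Lemma comp_lin_subst (a b c : nat) (p : {mpoly R[a]}) (S : 'M[R]_(a, b))
    (T : 'M[R]_(b, c)) :
  p \mPo lin_subst S \mPo lin_subst T = p \mPo lin_subst (S *m T).
Proof.
rewrite comp_mpolyA; congr (p \mPo _); apply: eq_from_tnth => i.
by rewrite !tnth_mktuple comp_linform row_mul.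
Qed.

Lemma mderiv_comp_lin_subst (a b : nat) (p : {mpoly R[a]}) (S : 'M[R]_(a, b))
    (i0 : 'I_a) (y : 'I_b) :
  (forall i, S i y = (i == i0)%:R) ->
  (p \mPo lin_subst S)^`M(y) = p^`M(i0) \mPo lin_subst S.
Proof.
move=> Sy; rewrite mderiv_comp (bigD1 i0) //= big1 => [|i /negbTE ii0].
  by rewrite tnth_mktuple mderiv_linform mxE Sy eqxx mpolyC1 mulr1 addr0.
by rewrite tnth_mktuple mderiv_linform mxE Sy ii0 mpolyC0 mulr0.
Qed.

Lemma mderivm_comp_lin_subst (a b : nat) (p : {mpoly R[a]}) (S : 'M[R]_(a, b))
    (T : Type) (r : seq T) (F : T -> 'I_b) (G : T -> 'I_a) :
  (forall x i, S i (F x) = (i == G x)%:R) ->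
  (p \mPo lin_subst S)^`M[\sum_(x <- r) U_(F x)] =
  p^`M[\sum_(x <- r) U_(G x)] \mPo lin_subst S.
Proof.
move=> SF; elim: r => [|x r IHr]; first by rewrite !big_nil !mderivm0m.
rewrite !big_cons ![(U_(_) + _)%MM]addmC !mderivmDm IHr !mderivmU1m.
exact: mderiv_comp_lin_subst.
Qed.

End LinearSubstitution.

Lemma prodr_count_mem (R : comNzRingType) (T : finType) (s : seq T)
    (F : T -> R) :
  \prod_(x <- s) F x = \prod_x F x ^+ count_mem x s.
Proof.
elim: s => [|x s IHs]; first by rewrite big_nil big1.
rewrite big_cons IHs /=; under [RHS]eq_bigr => y _ do rewrite exprD.
rewrite big_split /=; congr (_ * _).
rewrite (bigD1 x) //= eqxx expr1 big1 ?mulr1 // => y.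
by rewrite eq_sym => /negbTE ->.
Qed.

Lemma exists_tuple_count_mem (T : finType) (mult : T -> nat) (n : nat) :
  (\sum_x mult x)%N = n ->
  exists t : n.-tuple T, forall x, count_mem x t = mult x.
Proof.
set s := flatten [seq nseq (mult x) x | x <- enum T].
have count_s x : count_mem x s = mult x.
  rewrite count_flatten -map_comp sumnE big_map big_enum /= (bigD1 x) //=.
  rewrite count_nseq /= eqxx mul1n big1 ?addn0 // => y /negbTE yx.
  by rewrite count_nseq /= yx.
have size_s : size s = (\sum_x mult x)%N.
  rewrite size_flatten sumnE /shape -map_comp big_map big_enum.
  by apply: eq_bigr => x _; rewrite /= size_nseq.
move=> sum_mult; exists (tcast (etrans size_s sum_mult) (in_tuple s)).
by move=> x; rewrite val_tcast count_s.
Qed.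

Section HeraldedPolynomial.
Variable R : comNzRingType.

Lemma FpolyE (N : nat) (A : 'M[R]_N) (nin : 'I_N -> nat) (c : 'I_N -> R) :
  Fpoly A nin c = \prod_(i < N) (c i *: linform (row i A) ^+ nin i).
Proof.
apply: eq_bigr => i _; congr (_ *: _ ^+ _).
by apply: eq_bigr => j _; rewrite mxE.
Qed.

Lemma comp_Fpoly (N b : nat) (A : 'M[R]_N) (nin : 'I_N -> nat) (c : 'I_N -> R)
    (S : 'M[R]_(N, b)) :
  Fpoly A nin c \mPo lin_subst S =
  (\prod_(i < N) c i) *: \prod_(i < N) linform (row i (A *m S)) ^+ nin i.
Proof.
rewrite FpolyE rmorph_prod -scaler_prod; apply: eq_bigr => i _.
by rewrite /= comp_mpolyZ rmorphXn /= comp_linform row_mul.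
Qed.

Definition single_photon_mx (a b : nat) (B : 'M[R]_(a, b)) (s : seq 'I_a) :
    'M[R]_b :=
  \matrix_(p < b) nth 0 [seq row i B | i <- s] p.

Lemma Fpoly_single_photon_mx (a b n : nat) (B : 'M[R]_(a, b)) (s : seq 'I_a) :
  size s = n -> (n <= b)%N ->
  Fpoly (single_photon_mx B s) (fun p => (p < n)%N : nat) (fun _ => 1) =
  \prod_(i <- s) linform (row i B).
Proof.
move=> size_s le_nb; rewrite FpolyE.
rewrite -[RHS](big_map (fun i => row i B) xpredT) (big_nth 0) size_map size_s.
rewrite big_mkord (big_ord_widen b (fun p => linform (nth 0 _ p)) le_nb).
rewrite [RHS]big_mkcond /=; apply: eq_bigr => p _.
by rewrite scale1r rowK; case: (p < n)%N; rewrite ?expr0 ?expr1.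
Qed.

Lemma herald_substE (K M : nat) : herald_subst R K M = lin_subst (pid_mx K).
Proof.
apply: eq_from_tnth => i; rewrite !tnth_mktuple pid_mx_col.
case: split_ordP => [k|j] ->; first by rewrite rowKu row1 linform_delta.
by rewrite rowKd row0 linform0.
Qed.

Lemma embed_targetE (NT K : nat) (Q : {mpoly R[NT]}) :
  embed_target K Q = Q \mPo lin_subst (pid_mx NT).
Proof.
congr (Q \mPo _); apply: eq_from_tnth => i; rewrite !tnth_mktuple.
case: insubP => [k _ ik|]; last first.
  move=> le_Ki; rewrite -linform0; congr linform; apply/rowP => j.
  by rewrite !mxE; case: eqP => // ij; move: le_Ki; rewrite /= ij ltn_ord.
rewrite -(linform_delta R k); congr linform; apply/rowP => j.
by rewrite !mxE ltn_ord andbT -ik eq_sym.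
Qed.

Lemma comp_embed_target (NT K K' : nat) (Q : {mpoly R[NT]}) :
  (NT <= K)%N ->
  embed_target K Q \mPo lin_subst (pid_mx NT) = embed_target K' Q.
Proof.
move=> le_NT_K.
by rewrite !embed_targetE comp_lin_subst mul_pid_mx minnn (minn_idPr le_NT_K).
Qed.

End HeraldedPolynomial.

Section Map.
Variables (R S : comNzRingType) (f : {rmorphism R -> S}).

Lemma map_linform (b : nat) (r : 'rV[R]_b) :
  map_mpoly f (linform r) = linform (map_mx f r).
Proof.
rewrite raddf_sum; apply: eq_bigr => j _.
by rewrite /= map_mpolyZ map_mpolyX mxE.
Qed.

Lemma map_comp_lin_subst (a b : nat) (p : {mpoly R[a]}) (A : 'M[R]_(a, b)) :
  map_mpoly f (p \mPo lin_subst A) = map_mpoly f p \mPo lin_subst (map_mx f A).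
Proof.
elim/mpoly_ring_ind: p => [c|i|p q Hp Hq|p q Hp Hq].
- by rewrite comp_mpolyC !map_mpolyC comp_mpolyC.
- rewrite comp_mpolyXU map_mpolyX comp_mpolyXU -!tnth_nth !tnth_mktuple.
  by rewrite map_linform map_row.
- by rewrite !raddfD /= Hp Hq.
- by rewrite !rmorphM /= Hp Hq.
Qed.

Lemma map_mpoly_mderivm (a : nat) (m : 'X_{1..a}) (p : {mpoly R[a]}) :
  map_mpoly f (p^`M[m]) = (map_mpoly f p)^`M[m].
Proof.
apply/mpolyP => m'; rewrite mcoeff_map_mpoly !mcoeff_mderivm.
by rewrite mcoeff_map_mpoly raddfMn.
Qed.

Lemma map_Fpoly (N : nat) (A : 'M[R]_N) (nin : 'I_N -> nat) (c : 'I_N -> R)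
    (c' : 'I_N -> S) :
  (forall i, f (c i) = c' i) ->
  map_mpoly f (Fpoly A nin c) = Fpoly (map_mx f A) nin c'.
Proof.
move=> fc; rewrite !FpolyE rmorph_prod; apply: eq_bigr => i _.
by rewrite /= map_mpolyZ rmorphXn /= map_linform map_row fc.
Qed.

Lemma map_Gpoly (K M : nat) (A : 'M[R]_(K + M)) (nin : 'I_(K + M) -> nat)
    (c : 'I_(K + M) -> R) (c' : 'I_(K + M) -> S) (mpat : 'I_M -> nat) (d : R) :
  (forall i, f (c i) = c' i) ->
  map_mpoly f (Gpoly A nin c mpat d) = Gpoly (map_mx f A) nin c' mpat (f d).
Proof.
move=> fc; rewrite /Gpoly !herald_substE map_mpolyZ map_comp_lin_subst.
by rewrite map_mpoly_mderivm (map_Fpoly _ _ fc) map_pid_mx.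
Qed.

Lemma map_embed_target (NT K : nat) (Q : {mpoly R[NT]}) :
  map_mpoly f (embed_target K Q) = embed_target K (map_mpoly f Q).
Proof. by rewrite !embed_targetE map_comp_lin_subst map_pid_mx. Qed.

End Map.

Lemma herald_mnm_count (K M : nat) (mpat : 'I_M -> nat) (s : seq 'I_M) :
  (forall j, count_mem j s = mpat j) ->
  herald_mnm K mpat = (\sum_(j <- s) U_(rshift K j))%MM.
Proof.
move=> count_s; apply/mnmP => i; rewrite mnmE mnm_sumE.
have -> : (\sum_(j <- s) U_(rshift K j)%MM i =
           count (fun j => rshift K j == i) s)%N.
  rewrite -sum1_count [RHS]big_mkcond.
  by apply: eq_bigr => j _; rewrite mnm1E; case: eqP.
case: split_ordP => [k|j0] ->; last first.
  by rewrite -count_s; apply: eq_count => j; rewrite /= eq_rshift.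
rewrite (eq_count (a2 := pred0)) ?count_pred0 // => j.
by rewrite /= eq_sym eq_lrshift.
Qed.

Lemma herald_mnm_tuple (K M m : nat) (mpat : 'I_M -> nat) (t : m.-tuple 'I_M) :
  (forall j, count_mem j t = mpat j) ->
  herald_mnm K mpat = (\sum_(y < m) U_(rshift K (tnth t y)))%MM.
Proof. by move=> count_t; rewrite (herald_mnm_count K count_t) big_tuple. Qed.

Lemma herald_mnm_ones (K m : nat) :
  herald_mnm K (fun _ : 'I_m => 1%N) = (\sum_(y < m) U_(rshift K y))%MM.
Proof.
under eq_bigr => y _ do rewrite -[y in rshift K y](tnth_ord_tuple y).
apply: herald_mnm_tuple => y.
by rewrite val_ord_tuple count_uniq_mem ?enum_uniq ?mem_enum.
Qed.

Section HeraldMerge.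
Variable R : comNzRingType.
Variables (K M K' m NT : nat) (owner : m.-tuple 'I_M).
Hypothesis le_NT_K : (NT <= K)%N.

Definition herald_merge_mx : 'M[R]_(K + M, K' + m) :=
  block_mx (pid_mx NT) 0 0 (\matrix_(j, y) (tnth owner y == j)%:R).

Lemma herald_merge_mx_rshift (i : 'I_(K + M)) (y : 'I_m) :
  herald_merge_mx i (rshift K' y) = (i == rshift K (tnth owner y))%:R.
Proof.
case: (split_ordP i) => [k|j] ->; first by rewrite block_mxEur mxE eq_lrshift.
by rewrite block_mxEdr mxE eq_rshift eq_sym.
Qed.

Lemma herald_merge_mx_pid :
  herald_merge_mx *m (pid_mx K' : 'M_(K' + m, K')) = pid_mx NT.
Proof.
rewrite pid_mx_col mul_block_col !mulmx1 !mulmx0 addr0 add0r.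
apply/matrixP => i j; case: (split_ordP i) => [k|l] ->.
  by rewrite col_mxEu !mxE.
rewrite col_mxEd !mxE /=.
by rewrite ltnNge (leq_trans le_NT_K (leq_addr _ _)) andbF.
Qed.

Lemma mderivm_herald_merge (mpat : 'I_M -> nat) (P : {mpoly R[K + M]}) :
  (forall j, count_mem j owner = mpat j) ->
  (P \mPo lin_subst herald_merge_mx)^`M[herald_mnm K' (fun _ : 'I_m => 1%N)] =
  P^`M[herald_mnm K mpat] \mPo lin_subst herald_merge_mx.
Proof.
move=> count_owner; rewrite herald_mnm_ones (herald_mnm_tuple K count_owner).
by apply: mderivm_comp_lin_subst => y i; apply: herald_merge_mx_rshift.
Qed.

End HeraldMerge.

Lemma comp_Gpoly_herald_merge (R : comNzRingType) (K M K' m NT n : nat)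
    (A : 'M[R]_(K + M)) (nin : 'I_(K + M) -> nat) (c : 'I_(K + M) -> R)
    (mpat : 'I_M -> nat) (d : R)
    (owner : m.-tuple 'I_M) (photons : n.-tuple 'I_(K + M)) :
  (NT <= K)%N -> (n <= K' + m)%N ->
  (forall j, count_mem j owner = mpat j) ->
  (forall i, count_mem i photons = nin i) ->
  let S := herald_merge_mx R K K' NT owner in
  Gpoly A nin c mpat d \mPo lin_subst (pid_mx NT) =
  (d * \prod_i c i) *:
    Gpoly (single_photon_mx (A *m S) photons) (fun p => (p < n)%N : nat)
      (fun _ => 1) (fun _ : 'I_m => 1%N) 1.
Proof.
move=> le_NT_K le_n_Km count_owner count_photons S.
have F_S : Fpoly A nin c \mPo lin_subst S = (\prod_i c i) *:
    Fpoly (single_photon_mx (A *m S) photons) (fun p => (p < n)%N : nat)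
      (fun _ => 1).
  rewrite comp_Fpoly Fpoly_single_photon_mx ?size_tuple //.
  rewrite (prodr_count_mem photons).
  by congr (_ *: _); apply: eq_bigr => i _; rewrite count_photons.
rewrite /Gpoly !herald_substE comp_mpolyZ comp_lin_subst.
rewrite mul_pid_mx !(minn_idPr le_NT_K).
rewrite -(herald_merge_mx_pid R K' owner le_NT_K) -comp_lin_subst.
rewrite -(mderivm_herald_merge K' NT _ count_owner) F_S.
by rewrite mderivmZ comp_mpolyZ scale1r scalerA.
Qed.

Section Complex.
Variable R : realType.
Local Notation C := R[i].

Lemma Gheralded_single_photons (K M : nat) (A : 'M[C]_(K + M))
    (nin : 'I_(K + M) -> nat) :
  (forall i, (nin i <= 1)%N) ->
  Gheralded A nin (fun _ : 'I_M => 1%N) =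
  Gpoly A nin (fun _ => 1) (fun _ => 1%N) 1.
Proof.
move=> nin_le1; have in_const1 i : in_const R nin i = 1.
  have -> : in_const R nin i = (sqrtC (1%N)%:R)^-1.
    by rewrite /in_const; case: (nin i) (nin_le1 i) => [|[]].
  by rewrite mulr1n sqrtC1 invr1.
have herald1 : herald_const R (fun _ : 'I_M => 1%N) = 1.
  by rewrite /herald_const big1_eq mulr1n invr1.
rewrite /Gheralded herald1 /Gpoly /Fpoly.
by under eq_bigr => i _ do rewrite in_const1.
Qed.

Lemma generable_single_photons (K M K' m NT n : nat) (nin : 'I_(K + M) -> nat)
    (mpat : 'I_M -> nat) (Q : {mpoly C[NT]}) :
  (NT <= K)%N -> (n <= K' + m)%N ->
  (\sum_i nin i)%N = n -> (\sum_j mpat j)%N = m ->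
  generable nin mpat Q ->
  generable (fun p : 'I_(K' + m) => (p < n)%N : nat) (fun _ : 'I_m => 1%N) Q.
Proof.
move=> le_NT_K le_n_Km sum_nin sum_mpat [A [gamma genQ]].
have [owner count_owner] := exists_tuple_count_mem sum_mpat.
have [photons count_photons] := exists_tuple_count_mem sum_nin.
exists (single_photon_mx (A *m herald_merge_mx _ K K' NT owner) photons).
exists (gamma * (herald_const R mpat * \prod_i in_const R nin i)).
rewrite Gheralded_single_photons => [|p]; last exact: leq_b1.
rewrite -scalerA -(comp_Gpoly_herald_merge _ _ _ le_NT_K le_n_Km
  count_owner count_photons).
by rewrite -comp_mpolyZ genQ comp_embed_target.
Qed.

Definition unknowns_point (N : nat) (gamma : C) (A : 'M[C]_N) :
    'I_(N * N).+1 -> C :=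
  fun x => if unlift ord0 x is Some t then mxvec A 0 t else gamma.

Lemma system_poly_at_point (NT K M : nat) (nin : 'I_(K + M) -> nat)
    (mpat : 'I_M -> nat) (Q : {mpoly C[NT]}) (gamma : C) (A : 'M[C]_(K + M)) :
  map_mpoly (meval (unknowns_point gamma A)) (system_poly nin mpat Q) =
  gamma *: Gheralded A nin mpat - embed_target K Q.
Proof.
set v := unknowns_point gamma A.
have v_gamma : meval v (gamma_var R (K + M)) = gamma.
  by rewrite mevalXU /v /unknowns_point unlift_none.
have v_A : map_mx (meval v) (A_var R (K + M)) = A.
  apply/matrixP => i j.
  by rewrite !mxE mevalXU /v /unknowns_point liftK mxvecE.
have v_Q : map_mpoly (meval v) (map_mpoly (fun c => mpolyC _ c) Q) = Q.
  by apply/mpolyP => mu; rewrite !mcoeff_map_mpoly /= mevalC.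
rewrite /system_poly raddfB /= map_mpolyZ /= v_gamma map_embed_target v_Q.
by rewrite (map_Gpoly _ _ _ _ (fun i => mevalC _ _)) v_A /= mevalC.
Qed.

Lemma certificate_not_generable (NT K M : nat) (nin : 'I_(K + M) -> nat)
    (mpat : 'I_M -> nat) (Q : {mpoly C[NT]}) :
  has_Nullstellensatz_certificate nin mpat Q -> ~ generable nin mpat Q.
Proof.
move=> [s [beta cert]] [A [gamma genQ]].
have := congr1 (meval (unknowns_point gamma A)) cert.
rewrite meval1 raddf_sum big1 => [/eqP|mu _]; first by rewrite oner_eq0.
rewrite /= mevalM -mcoeff_map_mpoly system_poly_at_point genQ subrr.
by rewrite mcoeff0 mulr0.
Qed.

End Complex.

Unset Implicit Arguments.
Set Strict Implicit.

Theorem theorem2 (R : realType) (n m NT : nat) (Q : {mpoly (complex R)[NT]}) :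
  (m <= n)%N -> (1 <= NT)%N -> Q != 0 -> Q \is (n - m)%N.-homog ->
  has_Nullstellensatz_certificate (@opt_input n m NT) (@opt_pattern m) Q ->
  forall (K M : nat) (nin : 'I_(K + M) -> nat) (mpat : 'I_M -> nat),
    (\sum_(i < K + M) nin i)%N = n ->
    (\sum_(j < M) mpat j)%N = m ->
    (NT <= K)%N ->
    ~ generable nin mpat Q.
Proof.
move=> _ _ _ _ cert K M nin mpat sum_nin sum_mpat le_NT_K genQ.
apply: (certificate_not_generable cert).
have le_n_opt : (n <= optK n m NT + m)%N.
  by rewrite /optK subnK ?leq_maxl // (leq_trans (leq_addl NT m)) ?leq_maxr.
exact: (generable_single_photons le_NT_K le_n_opt sum_nin sum_mpat genQ).
Qed.
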